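(* For every positive integer $h$, the sumset size set $\mathcal{R}_{\mathbf{Z}}(h,4)$ contains the $h$-term arithmetic progression $\{bh+1 : b \in [3,h+2]\}$.
   Context: For a positive integer $h$ and a finite set $A$ of integers, $hA$ denotes the set of all sums $a_1+\cdots+a_h$ with $a_1,\ldots,a_h \in A$ (not necessarily distinct). The sumset size set is $\mathcal{R}_{\mathbf{Z}}(h,k) = \{ |hA| : A \subseteq \mathbf{Z},\ |A| = k\}$. For real $u,v$, $[u,v] = \{n \in \mathbf{Z} : u \le n \le v\}$. *)

From mathcomp Require Import all_boot all_order all_algebra.
From mathcomp Require Import finmap.
Set Implicit Arguments. Unset Strict Implicit. Unset Printing Implicit Defensive.
Import GRing.Theory Num.Theory.
Local Open Scope fset_scope.
Local Open Scope ring_scope.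

Fixpoint sumset (h : nat) (A : {fset int}) : {fset int} :=
  match h with
  | 0%N => [fset (0 : int)]
  | h'.+1 => [fset (a + s : int) | a in A, s in sumset h' A]
  end.

Definition in_R_Z (h k n : nat) : Prop :=
  exists A : {fset int}, #|` A| = k /\ #|` sumset h A| = n.

From mathcomp Require Import all_boot all_order all_algebra.
From mathcomp Require Import finmap.
From mathcomp Require Import zify.
Set Implicit Arguments. Unset Strict Implicit. Unset Printing Implicit Defensive.
Import GRing.Theory Num.Theory.
Local Open Scope fset_scope.
Local Open Scope ring_scope.

(* With k = b - 1, the set A = {0, 1, k, k + 1} is the sum {0, 1} + {0, k}, and
   h-fold sumsets distribute over set addition, so hA = {i + j k : 0 <= i, j <= h}.
   Since k <= h + 1, the blocks [j k, j k + h] leave no gaps, so hA is the whole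
   interval [0, h + h k] = [0, b h]. *)

Definition fsadd (A B : {fset int}) : {fset int} := [fset a + b | a in A, b in B].

Lemma sumset_fsadd h A B :
  sumset h (fsadd A B) = fsadd (sumset h A) (sumset h B).
Proof.
apply/fsetP => x; elim: h x => [|h IH] x /=.
  rewrite inE; apply/eqP/imfset2P => [->|[a /fset1P -> [b /fset1P -> ->]]] //.
  by exists 0; rewrite ?inE //; exists 0; rewrite ?inE ?addr0.
apply/imfset2P/imfset2P.
  case=> c /imfset2P [a Ha [b Hb ->]] [s]; rewrite IH.
  case/imfset2P=> sa Hsa [sb Hsb ->] ->.
  exists (a + sa); first exact: in_imfset2.
  by exists (b + sb); [exact: in_imfset2 | rewrite addrACA].
case=> s /imfset2P [a Ha [sa Hsa ->]] [t /imfset2P [b Hb [sb Hsb ->]] ->].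
exists (a + b); first exact: in_imfset2.
by exists (sa + sb); [rewrite IH; exact: in_imfset2 | rewrite addrACA].
Qed.

Lemma mem_sumset_pair0 h (d x : int) :
  reflect (exists2 i : nat, (i <= h)%N & x = i%:Z * d) (x \in sumset h [fset 0; d]).
Proof.
elim: h x => [|h IH] x /=.
  rewrite inE; apply: (iffP eqP) => [->|[i]]; first by exists 0%N; rewrite ?mul0r.
  by rewrite leqn0 => /eqP -> ->; rewrite mul0r.
apply: (iffP idP).
  case/imfset2P=> a /fset2P aE [s /IH [i le_ih ->] ->].
  case: aE => ->; first by exists i; rewrite ?add0r // ltnW.
  by exists i.+1; rewrite // -add1n PoszD mulrDl mul1r.
case=> -[|i] le_ih ->; apply/imfset2P.
  exists 0; first exact: fset21.
  by exists 0; [apply/IH; exists 0%N; rewrite ?mul0r | rewrite mul0r addr0].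
exists d; first exact: fset22.
exists (i%:Z * d); first by apply/IH; exists i.
by rewrite -add1n PoszD mulrDl mul1r.
Qed.

Lemma two_digit_decomp h k n : (k <= h.+1)%N -> (n <= h + h * k)%N ->
  exists i j, [/\ (i <= h)%N, (j <= h)%N & n = i + j * k]%N.
Proof.
move=> le_k_h1 le_n.
have [le_qh|lt_hq] := leqP (n %/ k) h.
  exists (n %% k)%N, (n %/ k)%N; split=> //; last by rewrite addnC -divn_eq.
  have [k0|k_gt0] := posnP k; first by rewrite k0 modn0; lia.
  by have := ltn_pmod n k_gt0; lia.
exists (n - h * k)%N, h; split=> //; first lia.
have : (h.+1 * k <= n)%N by rewrite -leq_divRL //; lia.
rewrite mulSn; lia.
Qed.

Definition int_range (n : nat) : {fset int} := [fset x in [seq i%:Z | i <- iota 0 n.+1]].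

Lemma mem_int_range n x : (x \in int_range n) = (0 <= x <= n%:Z).
Proof.
rewrite in_fset; apply/mapP/idP => [[i]|].
  by rewrite mem_iota => ? ->; lia.
by case: x => // m; rewrite lez_nat => le_mn; exists m; rewrite ?mem_iota; lia.
Qed.

Lemma card_int_range n : #|` int_range n| = n.+1.
Proof.
rewrite card_fseq undup_id ?size_map ?size_iota //.
by rewrite map_inj_uniq ?iota_uniq // => ? ? [].
Qed.

Lemma fsadd_pairs0 (c d : int) :
  fsadd [fset 0; c] [fset 0; d] = [fset x in [:: 0; c; d; c + d]].
Proof.
apply/fsetP => x; rewrite in_fset !inE; apply/imfset2P/idP.
  by case=> a /fset2P [] -> [b /fset2P [] -> ->]; rewrite ?addr0 ?add0r eqxx ?orbT.
case/or4P => /eqP ->; [exists 0 | exists c | exists 0 | exists c];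
  rewrite ?fset21 ?fset22 //; [exists 0 | exists 0 | exists d | exists d];
  by rewrite ?fset21 ?fset22 ?addr0 ?add0r.
Qed.

Lemma sumset_01_0k h k : (k <= h.+1)%N ->
  sumset h (fsadd [fset 0; 1] [fset 0; k%:Z]) = int_range (h + h * k).
Proof.
move=> le_k_h1; apply/fsetP => x; rewrite sumset_fsadd mem_int_range.
apply/imfset2P/idP.
  case=> _ /mem_sumset_pair0 [i le_ih ->] [_ /mem_sumset_pair0 [j le_jh ->] ->].
  by rewrite mulr1; nia.
case: x => // n; rewrite lez_nat => /(two_digit_decomp le_k_h1) [i [j [le_ih le_jh ->]]].
exists i%:Z; first by apply/mem_sumset_pair0; exists i; rewrite ?mulr1.
by exists (j%:Z * k%:Z); [apply/mem_sumset_pair0; exists j | rewrite PoszD PoszM].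
Qed.

Theorem mainTheorem4 (h : nat) (hpos : (0 < h)%N) (b : nat)
  (hb : (3 <= b <= h + 2)%N) :
  in_R_Z h 4 (b * h + 1)%N.
Proof.
pose k := b.-1.
exists (fsadd [fset 0; 1] [fset 0; k%:Z]); split.
  by rewrite fsadd_pairs0 card_fseq undup_id //= !inE; lia.
by rewrite sumset_01_0k ?card_int_range; lia.
Qed.
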